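(* Let $\mathcal{H}$ be a complex separable Hilbert space and $A$ a bounded selfadjoint operator on $\mathcal{H}$. Put $\mathfrak{W}(\sigma_A):=\|A\|+\|I-A\|-1$ and $\mathcal{B}_0(A):=\|A\|-\|I-A\|$. Then $A$ is an effect (i.e. $\mathbb{O}\le A\le I$) if and only if $$\mathfrak{W}(\sigma_A)+\bigl|\mathcal{B}_0(A)\bigr|\le 1.$$
   Context: $\|\cdot\|$ is the operator norm, $I$ the identity, $\mathbb{O}$ the zero operator; $A\le B$ means $\langle\varphi,A\varphi\rangle\le\langle\varphi,B\varphi\rangle$ for all $\varphi$. *)

From mathcomp Require Import all_boot all_order all_algebra.
From mathcomp Require Import complex.
From mathcomp Require Import all_classical all_reals.
Import Order.TTheory GRing.Theory Num.Theory.
Local Open Scope ring_scope.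
Local Open Scope classical_set_scope.

Set Implicit Arguments. Unset Strict Implicit. Unset Printing Implicit Defensive.

Section Hilbert.
Variables (R : realType) (V : lmodType R[i]) (ip : V -> V -> R[i]).

(* <x, y>: conjugate-linear in x, linear in y (physics convention). *)
Definition is_inner_product : Prop :=
  [/\ (forall x a y z, ip x (a *: y + z) = a * ip x y + ip x z),
      (forall x y, ip y x = (ip x y)^*),
      (forall x, 0 <= ip x x) &
      (forall x, ip x x = 0 -> x = 0)].

Definition ipnorm (x : V) : R := Num.sqrt (complex.Re (ip x x)).

Definition ip_complete : Prop :=
  forall u : nat -> V,
    (forall e : R, 0 < e -> exists N : nat, forall m n : nat,
        (N <= m)%N -> (N <= n)%N -> ipnorm (u m - u n) < e) ->
    exists l : V, forall e : R, 0 < e -> exists N : nat, forall n : nat,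
        (N <= n)%N -> ipnorm (u n - l) < e.

Definition ip_separable : Prop :=
  exists d : nat -> V, forall (x : V) (e : R), 0 < e ->
    exists n : nat, ipnorm (x - d n) < e.

Definition separable_hilbert : Prop :=
  [/\ is_inner_product, ip_complete & ip_separable].

Definition bounded_operator (A : V -> V) : Prop :=
  linear A /\ exists M : R, forall x, ipnorm (A x) <= M * ipnorm x.

Definition selfadjoint (A : V -> V) : Prop :=
  forall x y, ip (A x) y = ip x (A y).

Definition opnorm (A : V -> V) : R :=
  sup [set ipnorm (A x) | x in [set x | ipnorm x <= 1]].

Definition idop : V -> V := fun x => x.
Definition zeroop : V -> V := fun _ => 0.
Definition subop (A B : V -> V) : V -> V := fun x => A x - B x.

Definition op_le (A B : V -> V) : Prop :=
  forall phi, ip phi (A phi) <= ip phi (B phi).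

Definition effect (A : V -> V) : Prop := op_le zeroop A /\ op_le A idop.

Definition Wsigma (A : V -> V) : R := opnorm A + opnorm (subop idop A) - 1.
Definition B0 (A : V -> V) : R := opnorm A - opnorm (subop idop A).

End Hilbert.

(* A self-adjoint A is an effect iff both A and I - A are contractions.
   If 0 <= B <= I then <Bx,Bx> <= <x,Bx> <= <x,x>, so ||B|| <= 1.
   Conversely, for self-adjoint B, ||x - Bx||^2 = ||x||^2 - 2<x,Bx> + ||Bx||^2,
   so ||I - B|| <= 1 forces 2<x,Bx> >= ||Bx||^2 >= 0.  Applying both facts to
   A and to I - A, and using W + |B_0| = 2 max(||A||, ||I - A||) - 1, gives the
   theorem. *)
From mathcomp Require Import all_boot all_order all_algebra.
From mathcomp Require Import complex.
From mathcomp Require Import all_classical all_reals.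
From mathcomp Require Import ring lra.
Import Order.TTheory GRing.Theory Num.Theory.
Local Open Scope ring_scope.

Lemma addB1_normB_le1P (R : realDomainType) (a b : R) :
  a + b - 1 + `|a - b| <= 1 <-> a <= 1 /\ b <= 1.
Proof.
case: (lerP 0 (a - b)) => hab.
  by rewrite (ger0_norm hab); split=> [|[]]; lra.
by rewrite (ltr0_norm hab); split=> [|[]]; lra.
Qed.

Section InnerProduct.
Local Open Scope classical_set_scope.
Local Open Scope complex_scope.
Variables (R : realType) (V : lmodType R[i]) (ip : V -> V -> R[i]).
Hypothesis hip : is_inner_product ip.
Local Notation Id := (@idop R V).
Local Notation O := (@zeroop R V).

Lemma ipDr x y z : ip x (y + z) = ip x y + ip x z.
Proof. by case: hip => H _ _ _; have := H x 1 y z; rewrite scale1r mul1r. Qed.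

Lemma ip0r x : ip x 0 = 0.
Proof. by apply: (addrI (ip x 0)); rewrite addr0 -ipDr addr0. Qed.

Lemma ipZr x a y : ip x (a *: y) = a * ip x y.
Proof. by case: hip => H _ _ _; rewrite -[a *: y]addr0 H ip0r addr0. Qed.

Lemma ipBr x y z : ip x (y - z) = ip x y - ip x z.
Proof. by rewrite ipDr -scaleN1r ipZr mulN1r. Qed.

Lemma ipC x y : ip y x = (ip x y)^*.
Proof. by case: hip. Qed.

Lemma ipDl x y z : ip (x + y) z = ip x z + ip y z.
Proof. by rewrite ipC ipDr rmorphD /= -!ipC. Qed.

Lemma ipBl x y z : ip (x - y) z = ip x z - ip y z.
Proof. by rewrite ipC ipBr rmorphB /= -!ipC. Qed.

Lemma ipZl x (t : R) y : ip (t%:C *: x) y = t%:C * ip x y.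
Proof. by rewrite ipC ipZr rmorphM /= -ipC; congr (_ * _); exact: conjc_real. Qed.

Lemma ipxx x : ip x x = (ipnorm ip x ^+ 2)%:C.
Proof.
have : 0 <= ip x x by case: hip.
rewrite /ipnorm; case: (ip x x) => a b; rewrite lecE /= => /andP[/eqP -> ha].
by rewrite sqr_sqrtr.
Qed.

Lemma ipnorm_ge0 x : 0 <= ipnorm ip x.
Proof. exact: sqrtr_ge0. Qed.

Lemma ipnorm0 : ipnorm ip 0 = 0.
Proof. by rewrite /ipnorm ip0r sqrtr0. Qed.

Lemma ipnorm_eq0 x : ipnorm ip x = 0 -> x = 0.
Proof.
case: hip => _ _ _ H hx; apply: H.
by rewrite ipxx hx expr0n.
Qed.

Lemma ipnormZ (t : R) x : ipnorm ip (t%:C *: x) = `|t| * ipnorm ip x.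
Proof.
rewrite {1}/ipnorm ipZl ipZr ipxx -!rmorphM /= mulrA -expr2 -exprMn.
by rewrite sqrtr_sqr normrM (ger0_norm (ipnorm_ge0 x)).
Qed.

(* The parallelogram law, used instead of the triangle inequality. *)
Lemma ipnormB_sqr_le x y :
  ipnorm ip (x - y) ^+ 2 <= 2 * (ipnorm ip x ^+ 2 + ipnorm ip y ^+ 2).
Proof.
have E : ip (x - y) (x - y) + ip (x + y) (x + y) = 2 * ip x x + 2 * ip y y.
  by rewrite !ipBl !ipBr !ipDl !ipDr; ring.
have := congr1 (@complex.Re R) E; rewrite !ipxx /=.
have := sqr_ge0 (ipnorm ip (x + y)); lra.
Qed.

Section Operators.
Variable B : V -> V.

Lemma linear_fun0 : linear B -> B 0 = 0.
Proof.
move=> hB; have := hB 1 0 0; rewrite !scale1r !addr0 => h.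
by apply: (addrI (B 0)); rewrite addr0 -{1}h.
Qed.

Lemma linear_funZ : linear B -> forall a x, B (a *: x) = a *: B x.
Proof. by move=> hB a x; have := hB a x 0; rewrite linear_fun0 // !addr0. Qed.

Lemma linear_funB : linear B -> forall x y, B (x - y) = B x - B y.
Proof. by move=> hB x y; rewrite addrC -scaleN1r hB scaleN1r addrC. Qed.

Lemma linear_subId : linear B -> linear (subop Id B).
Proof. by move=> hB a u v; rewrite /subop /idop hB scalerBr opprD addrACA. Qed.

Lemma selfadjoint_subId : selfadjoint ip B -> selfadjoint ip (subop Id B).
Proof. by move=> hBs x y; rewrite /subop /idop ipBl ipBr hBs. Qed.

Lemma subIdK : subop Id (subop Id B) = B.
Proof. by apply: boolp.funext => x; rewrite /subop /idop subKr. Qed.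

Lemma op_ge0_subId : op_le ip O (subop Id B) <-> op_le ip B Id.
Proof.
by split=> h phi; move: (h phi); rewrite /subop /idop /zeroop ipBr ip0r subr_ge0.
Qed.

Lemma bounded_subId : bounded_operator ip B -> bounded_operator ip (subop Id B).
Proof.
case=> hB [M hM]; split; first exact: linear_subId.
exists (2 + 2 * M ^+ 2) => x; rewrite /subop /idop.
have := ipnormB_sqr_le x (B x); have := hM x.
have := ipnorm_ge0 x; have := ipnorm_ge0 (B x); have := ipnorm_ge0 (x - B x).
move: (ipnorm ip x) (ipnorm ip (B x)) (ipnorm ip (x - B x)) => n b d hd hb hn hbM hd2.
have hM2 : b ^+ 2 <= M ^+ 2 * n ^+ 2 by nra.
have hK : d ^+ 2 <= ((2 + 2 * M ^+ 2) * n) ^+ 2 by rewrite exprMn; nra.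
have hKn : 0 <= (2 + 2 * M ^+ 2) * n by nra.
move: hK hKn; move: (_ * n) => c; nra.
Qed.

Lemma effect_contraction : linear B -> selfadjoint ip B -> effect ip B ->
  forall y, ipnorm ip (B y) <= ipnorm ip y.
Proof.
move=> hB hBs [h0 h1] y.
have key : ip (y - B y) (B (y - B y)) + ip (B y) (B y - B (B y))
           = ip y (B y) - ip (B y) (B y).
  by rewrite linear_funB // ipBl addrNK ipBr hBs.
have p1 : 0 <= ip (y - B y) (B (y - B y)).
  by have := h0 (y - B y); rewrite /zeroop ip0r.
have p2 : 0 <= ip (B y) (B y - B (B y)).
  by have := h1 (B y); rewrite /idop ipBr subr_ge0.
have p3 : ip (B y) (B y) <= ip y (B y) by rewrite -subr_ge0 -key addr_ge0.
have : ip (B y) (B y) <= ip y y by apply: le_trans p3 (h1 y).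
rewrite !ipxx lecR; have := ipnorm_ge0 (B y); have := ipnorm_ge0 y; nra.
Qed.

Lemma op_ge0_of_contraction_subId : selfadjoint ip B ->
  (forall x, ipnorm ip (x - B x) <= ipnorm ip x) -> op_le ip O B.
Proof.
move=> hBs hc x; rewrite /zeroop ip0r.
have E : (ipnorm ip (x - B x) ^+ 2)%:C
         = (ipnorm ip x ^+ 2)%:C - 2 * ip x (B x) + (ipnorm ip (B x) ^+ 2)%:C.
  by rewrite -!ipxx ipBl !ipBr (hBs x x); ring.
have h2 : 2 * ip x (B x)
          = (ipnorm ip x ^+ 2 - ipnorm ip (x - B x) ^+ 2 + ipnorm ip (B x) ^+ 2)%:C.
  by rewrite rmorphD rmorphB /= E; ring.
have : 0 <= 2 * ip x (B x).
  rewrite h2 ler0c; have := hc x; have := ipnorm_ge0 (x - B x).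
  have := sqr_ge0 (ipnorm ip (B x)); nra.
by rewrite pmulr_rge0 // ltr0n.
Qed.

End Operators.

Lemma bounded_has_ubound T : bounded_operator ip T ->
  has_ubound [set ipnorm ip (T x) | x in [set x | ipnorm ip x <= 1]].
Proof.
case=> _ [M hM]; exists `|M| => _ [x /= hx <-].
have := hM x; have := ipnorm_ge0 x; have := ler_norm M; have := normr_ge0 M; nra.
Qed.

Lemma opnorm_ub T x : bounded_operator ip T ->
  ipnorm ip (T x) <= opnorm ip T * ipnorm ip x.
Proof.
move=> hT; have hub := bounded_has_ubound T hT; case: (hT) => hlin _.
have [n0|n0] := eqVneq (ipnorm ip x) 0.
  by rewrite (ipnorm_eq0 _ n0) linear_fun0 // ipnorm0 mulr0.
have npos : 0 < ipnorm ip x by rewrite lt_neqAle eq_sym n0 ipnorm_ge0.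
set k := (ipnorm ip x)^-1.
have k_ge0 : 0 <= k by rewrite invr_ge0 ltW.
have hk : `|k| * ipnorm ip x = 1 by rewrite ger0_norm // mulVf.
have : ipnorm ip (T (k%:C *: x)) <= opnorm ip T.
  by apply: (ub_le_sup hub); exists (k%:C *: x); rewrite //= ipnormZ hk.
rewrite linear_funZ // ipnormZ (ger0_norm k_ge0).
move/(ler_wpM2r (ltW npos)).
by rewrite mulrAC /k mulVf ?mul1r // gt_eqF.
Qed.

Lemma opnorm_le1P T : bounded_operator ip T ->
  opnorm ip T <= 1 <-> forall x, ipnorm ip (T x) <= ipnorm ip x.
Proof.
move=> hT; split=> [h x | h].
  apply: le_trans (opnorm_ub T x hT) _.
  by rewrite ler_piMl ?ipnorm_ge0.
apply: ge_sup; first by exists (ipnorm ip (T 0)), 0; rewrite //= ipnorm0.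
by move=> _ [x hx <-]; apply: le_trans (h x) hx.
Qed.

Lemma effect_opnormP A : bounded_operator ip A -> selfadjoint ip A ->
  effect ip A <-> opnorm ip A <= 1 /\ opnorm ip (subop Id A) <= 1.
Proof.
move=> hAb hAs; have hIb := bounded_subId A hAb; have hIs := selfadjoint_subId A hAs.
rewrite (opnorm_le1P A hAb) (opnorm_le1P _ hIb); split.
- move=> [h0 h1]; have hIe : effect ip (subop Id A).
    by split; [apply/op_ge0_subId | rewrite -op_ge0_subId subIdK].
  by split; apply: effect_contraction => //; [case: hAb | case: hIb].
- move=> [hA hI]; split; first exact: op_ge0_of_contraction_subId.
  apply/op_ge0_subId/op_ge0_of_contraction_subId => // x.
  by rewrite /subop /idop subKr; exact: hA.
Qed.

End InnerProduct.

Theorem mainTheorem4 (R : realType) (V : lmodType R[i]) (ip : V -> V -> R[i])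
  (hH : separable_hilbert ip) (A : V -> V)
  (hAb : bounded_operator ip A) (hAs : selfadjoint ip A) :
  effect ip A <-> Wsigma ip A + `|B0 ip A| <= 1.
Proof.
case: hH => hip _ _.
by rewrite /Wsigma /B0 addB1_normB_le1P; apply: effect_opnormP.
Qed.
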